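(* Let $n$ agents have additive $\alpha$-ratio-bounded cost functions ($\alpha\ge1$) over chores $[m]$, and let $\ell=\lceil m/n\rceil\ge3$. Then the full allocation produced by the round-robin procedure (with any fixed ordering of agents and any tie-breaking) is $\left(1+\frac{\alpha-1}{\ell-1}\right)$-EFX.
   Context: A cost function $C:2^{[m]}\to\mathbb{R}_{\ge0}$ is additive if $C(S)=\sum_{c\in S}C(\{c\})$, and $\alpha$-ratio-bounded if $\max_b C(\{b\})/\min_b C(\{b\})\le\alpha$ (positive single-chore costs). Round-robin: fix an ordering $i_1,\dots,i_n$ of agents; in successive rounds, for $t=1,\dots,n$, agent $i_t$ takes a chore of minimum cost to itself among the remaining unallocated chores, until all chores are allocated (so there are $\lceil m/n\rceil$ rounds, the last possibly incomplete). An allocation is $\gamma$-EFX if for all agents $i,j$ and every $c\in X_i$, $C_i(X_i\setminus\{c\})\le\gamma\,C_i(X_j)$. *)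

From HB Require Import structures.
From mathcomp Require Import all_boot all_order all_algebra all_fingroup.
Set Implicit Arguments. Unset Strict Implicit. Unset Printing Implicit Defensive.
Import Order.TTheory GRing.Theory Num.Theory.
Local Open Scope ring_scope.

Definition cost (R : realFieldType) (m : nat) (c : 'I_m -> R) (S : {set 'I_m}) : R :=
  \sum_(x in S) c x.

(* alpha-ratio-bounded: positive single-chore costs and
   max_b c b / min_b c b <= alpha, i.e. c b / c b' <= alpha for all b, b'. *)
Definition ratio_bounded (R : realFieldType) (m : nat) (alpha : R) (c : 'I_m -> R) : Prop :=
  (forall b, 0 < c b) /\ (forall b b', c b / c b' <= alpha).

(* Round-robin with agent ordering given by the permutation sigma
   (agent i is the (sigma i)-th agent in the order, 0-based) and arbitrary
   tie-breaking: p t is the chore picked at step t (0-based); at step t the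
   agent i with sigma i = t mod n picks a chore of minimum cost to itself
   among the chores not picked at steps u < t. *)
Definition round_robin (R : realFieldType) (n m : nat) (C : 'I_n -> 'I_m -> R)
  (sigma : {perm 'I_n}) (X : 'I_n -> {set 'I_m}) : Prop :=
  exists p : 'I_m -> 'I_m,
    bijective p /\
    (forall (t : 'I_m) (i : 'I_n), nat_of_ord (sigma i) = (t %% n)%N ->
       forall x : 'I_m, (forall u : 'I_m, (u < t)%N -> p u != x) ->
         C i (p t) <= C i x) /\
    (forall i : 'I_n, X i = [set p t | t in [pred t : 'I_m | nat_of_ord (sigma i) == (t %% n)%N]]).

Definition EFX (R : realFieldType) (n m : nat) (gamma : R) (C : 'I_n -> 'I_m -> R)
  (X : 'I_n -> {set 'I_m}) : Prop :=
  forall (i j : 'I_n) (x : 'I_m), x \in X i ->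
    cost (C i) (X i :\ x) <= gamma * cost (C i) (X j).

From HB Require Import structures.
From mathcomp Require Import all_boot all_order all_algebra all_fingroup.
From mathcomp Require Import zify lra.
Set Implicit Arguments. Unset Strict Implicit. Unset Printing Implicit Defensive.
Import Order.TTheory GRing.Theory Num.Theory.
Local Open Scope ring_scope.

(* Fix agents i and j, and let d be the delay from a turn of i to the next
   turn of j.  Whenever i picks chore p t, the chore p (t + d) that j takes
   d steps later was still available, so c_i (p t) <= c_i (p (t + d)).  This
   matches every pick of i with a pick of j except possibly the last one,
   which costs at most alpha * c_min.  Hence c_i(X_i) <= c_i(X_j) + alpha c_min,
   and removing any chore of X_i (which costs at least c_min) leaves at most
   c_i(X_j) + (alpha - 1) c_min.  Since j gets at least l - 1 chores,
   c_min <= c_i(X_j) / (l - 1). *)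

Section NonnegSums.
Variable R : realFieldType.

Lemma ler_sum_subset (I : finType) (A B : pred I) (F : I -> R) :
  (forall i, A i -> B i) -> (forall i, B i -> 0 <= F i) ->
  \sum_(i | A i) F i <= \sum_(i | B i) F i.
Proof.
move=> sAB F0; rewrite [leRHS](bigID A) /=.
have -> : \sum_(i | A i) F i = \sum_(i | B i && A i) F i.
  by apply: eq_bigl => i; case Ai: (A i); rewrite ?andbT ?andbF ?sAB.
by rewrite lerDl sumr_ge0 // => i /andP[/F0].
Qed.

Lemma ler_sum_inj (I J : finType) (A : pred I) (B : pred J) (h : I -> J)
    (F : I -> R) (G : J -> R) :
    {in A &, injective h} -> (forall i, A i -> B (h i)) ->
    (forall j, B j -> 0 <= G j) -> (forall i, A i -> F i <= G (h i)) ->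
  \sum_(i | A i) F i <= \sum_(j | B j) G j.
Proof.
move=> h_inj hAB G0 leFG; apply: le_trans (ler_sum _ leFG) _.
rewrite -(big_imset G h_inj); apply: ler_sum_subset => // _ /imsetP[i Ai ->].
exact: hAB.
Qed.

Lemma ler_sum_subsingleton (I : finType) (A : pred I) (F : I -> R) (b : R) :
    (forall i j, A i -> A j -> i = j) -> (forall i, A i -> F i <= b) -> 0 <= b ->
  \sum_(i | A i) F i <= b.
Proof.
move=> A1 Fb b0; have [i Ai|A0] := pickP A; last by rewrite big_pred0.
rewrite (bigD1 i) //= big1 ?addr0 ?Fb // => j /andP[Aj /eqP[]].
exact: A1.
Qed.

End NonnegSums.

Lemma cost_setD1 (R : realFieldType) (m : nat) (c : 'I_m -> R) (S : {set 'I_m}) x :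
  x \in S -> cost c (S :\ x) = cost c S - c x.
Proof. by move=> Sx; rewrite /cost (big_setD1 x Sx) addrC addKr. Qed.

Lemma eq_mod_near (n a b : nat) :
  a = b %[mod n] -> (a < b + n)%N -> (b < a + n)%N -> a = b.
Proof.
wlog le_ab : a b / (a <= b)%N => [hwlog|ab_mod _ ba_lt].
  by case/orP: (leq_total a b) => ? ? ? ?; [|symmetry]; apply: hwlog.
have n_dvd : (n %| b - a)%N by rewrite -eqn_mod_dvd // ab_mod.
case: (posnP (b - a)) => [|/dvdn_leq /(_ n_dvd)]; lia.
Qed.

Lemma card_residue_ge (n m s : nat) : (s < n)%N ->
  (((m + n.-1) %/ n).-1 <= #|[pred t : 'I_m | s == (t %% n)%N]|)%N.
Proof.
move=> s_lt; set l := ((m + n.-1) %/ n)%N.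
have lt_m (r : 'I_l.-1) : (s + r * n < m)%N.
  by have := ltn_ord r; have := leq_divM (m + n.-1) n; rewrite -/l; nia.
pose h (r : 'I_l.-1) : 'I_m := Ordinal (lt_m r).
have h_inj : injective h.
  move=> r r' /(congr1 val) /= /addnI /eqP; rewrite eqn_mul2r.
  by case/orP => [/eqP n0|/eqP/val_inj //]; rewrite n0 in s_lt.
rewrite -[X in (X <= _)%N]card_ord -(card_imset _ h_inj).
apply/subset_leq_card/subsetP => _ /imsetP[r _ ->].
by rewrite inE /= addnC modnMDl modn_small.
Qed.

Definition turns (n m : nat) (sigma : {perm 'I_n}) (i : 'I_n) : pred 'I_m :=
  [pred t : 'I_m | nat_of_ord (sigma i) == (t %% n)%N].

Definition turn_gap (n : nat) (sigma : {perm 'I_n}) (i j : 'I_n) : nat :=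
  ((n + sigma j - sigma i) %% n)%N.

Lemma turn_gap_lt n (sigma : {perm 'I_n}) (i j : 'I_n) : (turn_gap sigma i j < n)%N.
Proof. by rewrite ltn_pmod // (leq_ltn_trans _ (ltn_ord i)). Qed.

Lemma turns_shift n m (sigma : {perm 'I_n}) (i j : 'I_n) (t u : 'I_m) :
  t \in turns sigma i -> u = (t + turn_gap sigma i j)%N :> nat -> u \in turns sigma j.
Proof.
rewrite !inE => /eqP t_mod ->; rewrite /turn_gap modnDmr {1}(divn_eq t n) -t_mod.
rewrite -addnA subnKC; last by rewrite ltnW // ltn_addr.
by rewrite modnMDl modnDl modn_small.
Qed.

Lemma turns_late_eq n m (sigma : {perm 'I_n}) (i j : 'I_n) (t u : 'I_m) :
    t \in turns sigma i -> u \in turns sigma i ->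
    (m <= t + turn_gap sigma i j)%N -> (m <= u + turn_gap sigma i j)%N ->
  t = u.
Proof.
rewrite !inE => /eqP t_mod /eqP u_mod late_t late_u; apply/ord_inj/(@eq_mod_near n).
- by rewrite -t_mod -u_mod.
- by have := turn_gap_lt sigma i j; have := ltn_ord t; lia.
- by have := turn_gap_lt sigma i j; have := ltn_ord u; lia.
Qed.

Section RoundRobin.
Variables (R : realFieldType) (n m : nat) (C : 'I_n -> 'I_m -> R).
Variables (sigma : {perm 'I_n}) (p : 'I_m -> 'I_m).
Hypothesis p_inj : injective p.
Hypothesis p_greedy : forall (t : 'I_m) (i : 'I_n), nat_of_ord (sigma i) = (t %% n)%N ->
  forall x : 'I_m, (forall u : 'I_m, (u < t)%N -> p u != x) -> C i (p t) <= C i x.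

Lemma cost_picks (c : 'I_m -> R) (T : pred 'I_m) :
  cost c [set p t | t in T] = \sum_(t in T) c (p t).
Proof. by rewrite /cost big_imset // => t u _ _ /p_inj. Qed.

Lemma greedy_le_later i (t u : 'I_m) :
  t \in turns sigma i -> (t <= u)%N -> C i (p t) <= C i (p u).
Proof.
move=> /eqP t_turn le_tu; apply: p_greedy => // v lt_vt; apply/eqP => /p_inj v_u.
by move: lt_vt; rewrite v_u ltnNge le_tu.
Qed.

Lemma turns_cost_le i j (b : R) :
    (forall y, 0 <= C i y) -> (forall y, C i y <= b) -> 0 <= b ->
  \sum_(t in turns sigma i) C i (p t) <= \sum_(t in turns sigma j) C i (p t) + b.
Proof.
move=> C0 Cb b0; set d := turn_gap sigma i j.
rewrite (bigID (fun t : 'I_m => (t + d < m)%N)) /=; apply: lerD.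
- pose h (t : 'I_m) : 'I_m := insubd t (t + d)%N.
  apply: (ler_sum_inj (h := h)) => [t u /andP[_ td] /andP[_ ud] | t /andP[ti td] |
      y _ | t /andP[ti td]].
  + by move/(congr1 val); rewrite /= !insubdK // => /addIn /val_inj.
  + by apply: turns_shift ti _; rewrite insubdK.
  + exact: C0.
  + by apply: greedy_le_later ti _; rewrite insubdK // leq_addr.
- apply: ler_sum_subsingleton => // t u /andP[ti td] /andP[ui ud].
  by apply: (turns_late_eq (j := j) ti ui); rewrite leqNgt.
Qed.

End RoundRobin.

Theorem mainTheorem9 (R : realFieldType) (n m : nat) (alpha : R)
  (C : 'I_n -> 'I_m -> R) (sigma : {perm 'I_n}) (X : 'I_n -> {set 'I_m}) :
  (0 < n)%N ->
  1 <= alpha ->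
  (forall i, ratio_bounded alpha (C i)) ->
  (3 <= (m + n.-1) %/ n)%N ->
  round_robin C sigma X ->
  EFX (1 + (alpha - 1) / (((m + n.-1) %/ n).-1)%:R) C X.
Proof.
move=> _ alpha_ge1 ratio l_ge3 [p [/bij_inj p_inj [p_greedy defX]]] i j x.
rewrite !defX => xXi; rewrite cost_setD1 // !cost_picks //.
rewrite -/(turns sigma i) -/(turns sigma j).
set l := ((m + n.-1) %/ n)%N in l_ge3 *; set c := C i.
have [c_pos c_ratio] := ratio i.
pose w := [arg min_(k < x) c k]%O.
have w_min k : c w <= c k by rewrite /w; case: arg_minP => // v _; apply.
set S := \sum_(t in turns sigma j) c (p t).
have cost_i : \sum_(t in turns sigma i) c (p t) <= S + alpha * c w.
  apply: turns_cost_le => // [y|y|]; first exact: ltW.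
    by rewrite -ler_pdivrMr // c_ratio.
  by apply: mulr_ge0; [exact: le_trans ler01 alpha_ge1 | exact: ltW].
have cost_j : l.-1%:R * c w <= S.
  apply: le_trans (ler_sum _ (fun t _ => w_min (p t))).
  rewrite sumr_const -[c w *+ _]mulr_natl ler_pM2r // ler_nat.
  exact: card_residue_ge.
have l_pos : 0 < l.-1%:R :> R by rewrite ltr0n; lia.
have : (alpha - 1) * c w <= (alpha - 1) / l.-1%:R * S.
  by rewrite -mulrA ler_wpM2l ?subr_ge0 // ler_pdivlMl.
have := w_min x; lra.
Qed.
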